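(* For $i=1,2$ let $\mathcal{G}_i$ be an $r_i$-regular graph with $n_i$ vertices, and let $\nu_{11},\ldots,\nu_{1n_1}$ be the signless Laplacian eigenvalues of $\mathcal{G}_1$. Then $\mathcal{G}_1\circledast\mathcal{G}_2$ is signless Laplacian integral if and only if $\mathcal{G}_2$ is signless Laplacian integral and, for each $i=1,2,\ldots,n_1$, the roots of $x-n_2-n_2\nu_{1i}-n_2\chi_{Q_{\mathcal{G}_2}}(x-n_2)$ are integers.
   Context: All graphs are simple, finite and undirected. $Q_{\mathcal{G}}=D_{\mathcal{G}}+A_{\mathcal{G}}$ is the signless Laplacian matrix (degree matrix plus adjacency matrix). A graph is signless Laplacian integral if all eigenvalues of its signless Laplacian matrix are integers. The signless Laplacian coronal of a graph $\mathcal{G}$ on $n$ vertices is the rational function $\chi_{Q_{\mathcal{G}}}(x)=\mathbf{1}_n^T(xI_n-Q_{\mathcal{G}})^{-1}\mathbf{1}_n$, $\mathbf{1}_n$ the all-ones vector; ''roots'' of the expression in the claim are the values of $x$ at which this rational function vanishes. The graph product $\mathcal{G}_1\circledast\mathcal{G}_2$ of $\mathcal{G}_1$ (vertices $u_1,\ldots,u_{n_1}$) and $\mathcal{G}_2$ (vertices $v_1,\ldots,v_{n_2}$) has vertex set $\{a_{ik},b_{ik}:1\le i\le n_1,1\le k\le n_2\}$ and edges: $a_{ik}a_{jl}$ for all $k,l$ whenever $u_iu_j\in E(\mathcal{G}_1)$; $b_{ri}b_{rj}$ for all $r$ whenever $v_iv_j\in E(\mathcal{G}_2)$; $a_{ip}b_{iq}$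 for all $i,p,q$. *)

From HB Require Import structures.
From mathcomp Require Import all_boot all_order all_algebra algC.
Set Implicit Arguments. Unset Strict Implicit. Unset Printing Implicit Defensive.
Import Order.TTheory GRing.Theory Num.Theory.
Local Open Scope ring_scope.

Definition simple_graph (V : finType) (e : rel V) : Prop :=
  irreflexive e /\ symmetric e.

Definition gdeg (V : finType) (e : rel V) (v : V) : nat := #|[set w | e v w]|.

Definition regular (V : finType) (e : rel V) (r : nat) : Prop :=
  forall v : V, gdeg e v = r.

(* Signless Laplacian Q = D + A, over the algebraic complex numbers, with
   rows/columns indexed by the enumeration of V. *)
Definition slap (V : finType) (e : rel V) : 'M[algC]_#|V| :=
  \matrix_(i, j) ((i == j)%:R * (gdeg e (enum_val i))%:R
                  + (e (enum_val i) (enum_val j))%:R).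

Definition SL_integral (V : finType) (e : rel V) : Prop :=
  forall mu : algC, eigenvalue (slap e) mu -> mu \in Num.int.

(* The signless Laplacian coronal chi_Q(x) = 1^T (xI - Q)^{-1} 1, meaningful
   when xI - Q is invertible. *)
Definition coronal_defined (n : nat) (Q : 'M[algC]_n) (x : algC) : bool :=
  (x%:M - Q) \in unitmx.

Definition coronal (n : nat) (Q : 'M[algC]_n) (x : algC) : algC :=
  \sum_(i < n) \sum_(j < n) (invmx (x%:M - Q)) i j.

(* The product G1 circledast G2: vertices a_{ik} = inl (i,k), b_{ik} = inr (i,k). *)
Definition gprod_rel (V1 V2 : finType) (e1 : rel V1) (e2 : rel V2)
  : rel ((V1 * V2) + (V1 * V2))%type :=
  fun x y =>
    match x, y with
    | inl (i, _), inl (j, _) => e1 i j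
    | inr (r, i), inr (s, j) => (r == s) && e2 i j
    | inl (i, _), inr (j, _) => i == j
    | inr (j, _), inl (i, _) => i == j
    end.

From HB Require Import structures.
From mathcomp Require Import all_boot all_order all_algebra algC ring.
Import Order.TTheory GRing.Theory Num.Theory.
Set Implicit Arguments. Unset Strict Implicit. Unset Printing Implicit Defensive.
Local Open Scope ring_scope.

(* The fibre sums [a_sum f i = sum_k f(a_ik)] and [b_sum f i = sum_k f(b_ik)]
   of an eigenvector f of Q(G1 ⊛ G2) for x satisfy the eigen-equations of the
   quotient matrix [[n2 (Q1 + I), n2 I], [n2 I, (n2 + 2 r2) I]].  If all fibre
   sums vanish, the eigen-equation at a vertex where f is nonzero gives either
   x = n2 d1(j) + n2 (at a_jl) or an eigenvector of Q2 for x - n2 (the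
   restriction of f to b_s.).  Otherwise, unless x = n2 + 2 r2, we get
   b_sum = n2/(x - n2 - 2 r2) a_sum, and a_sum is an eigenvector of Q1 for some
   nu with x - n2 - n2 nu - n2^2/(x - n2 - 2 r2) = 0.  Since Q2 1 = 2 r2 1, the
   coronal of G2 is n2/(t - 2 r2), so this is the equation of the statement.
   Conversely each of these constructions yields an eigenvector of the
   product. *)

Lemma eigenvalue_unitmx (F : fieldType) n (A : 'M[F]_n) a :
  eigenvalue A a = ((a%:M - A) \notin unitmx).
Proof.
rewrite unitmxE unitfE negbK.
apply/eigenvalueP/det0P => [[v Av v_nz] | [v v_nz Av]]; exists v => //.
  by rewrite mulmxBr Av mul_mx_scalar subrr.
by apply/eqP; rewrite -mul_mx_scalar eq_sym -subr_eq0 -mulmxBr Av.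
Qed.

Lemma sum_natr_eq (T : finType) (j : T) (F : T -> algC) :
  \sum_i (i == j)%:R * F i = F j.
Proof.
rewrite (bigD1 j) //= eqxx mul1r big1 ?addr0 // => i /negbTE ->.
by rewrite mul0r.
Qed.

Lemma sum_enum_val (V : finType) (F : V -> algC) :
  \sum_(i < #|V|) F (enum_val i) = \sum_x F x.
Proof. by rewrite -(big_enum_val F); apply: eq_bigl => x; rewrite inE. Qed.

Section SignlessLaplacian.
Variables (V : finType) (e : rel V).

Definition slap_app (f : V -> algC) (y : V) : algC :=
  (gdeg e y)%:R * f y + \sum_x (e x y)%:R * f x.

Lemma gdegE v : (gdeg e v)%:R = \sum_w (e v w)%:R :> algC.
Proof.
rewrite /gdeg -sum1_card natr_sum big_mkcond /=.
by apply: eq_bigr => w _; rewrite inE; case: (e v w).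
Qed.

Lemma slap_mulmx (u : 'rV_#|V|) j :
  (u *m slap e) 0 j = slap_app (fun x => u 0 (enum_rank x)) (enum_val j).
Proof.
rewrite mxE /slap /slap_app -[in RHS]sum_enum_val enum_valK.
under [in RHS]eq_bigr do rewrite enum_valK.
under [in LHS]eq_bigr do rewrite mxE mulrDr.
rewrite big_split /= (bigD1 j) //= eqxx mul1r big1 ?addr0 => [|i /negbTE->].
  by rewrite mulrC; congr (_ + _); apply: eq_bigr => i _; rewrite mulrC.
by rewrite mul0r mulr0.
Qed.

Lemma eq_slap_app f g : f =1 g -> slap_app f =1 slap_app g.
Proof.
move=> fg y; rewrite /slap_app fg; congr (_ + _).
by apply: eq_bigr => x _; rewrite fg.
Qed.

Lemma slap_eigenvalueP a :
  eigenvalue (slap e) a <->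
  exists2 f : V -> algC, exists x, f x != 0 & forall y, slap_app f y = a * f y.
Proof.
split => [/eigenvalueP [u u_eig u_nz] | [f [x fx_nz] f_eig]].
  exists (fun x => u 0 (enum_rank x)).
    have /existsP [i ui_nz] : [exists i, u 0 i != 0].
      apply: contraR u_nz => /existsPn u0; apply/eqP/rowP => i.
      by rewrite mxE; apply/eqP; have := u0 i; rewrite negbK.
    by exists (enum_val i); rewrite enum_valK.
  by move=> y; rewrite -(enum_rankK y) -slap_mulmx u_eig mxE enum_rankK.
apply/eigenvalueP; exists (\row_i f (enum_val i)).
  apply/rowP => j; rewrite slap_mulmx !mxE -f_eig.
  by apply: eq_slap_app => z; rewrite mxE enum_rankK.
apply: contraNneq fx_nz => /rowP /(_ (enum_rank x)).
by rewrite !mxE enum_rankK => ->.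
Qed.

Lemma slap_appZ c f y : slap_app (fun x => c * f x) y = c * slap_app f y.
Proof.
rewrite /slap_app mulrDr mulr_sumr mulrCA; congr (_ + _).
by apply: eq_bigr => x _; rewrite mulrCA.
Qed.

Lemma sum_slap_app f : \sum_y slap_app f y = \sum_x (2 * gdeg e x)%:R * f x.
Proof.
rewrite big_split /= exchange_big -big_split /=.
apply: eq_bigr => x _; rewrite -mulr_suml -gdegE -mulrDl.
by rewrite mul2n -addnn natrD.
Qed.

Section Regular.
Variable r : nat.
Hypotheses (e_sym : symmetric e) (e_reg : regular e r).

Lemma regular_sum_col y : \sum_x (e x y)%:R = r%:R :> algC.
Proof. by rewrite -(e_reg y) gdegE; apply: eq_bigr => x _; rewrite e_sym. Qed.

Lemma slap_app_cst c y : slap_app (fun=> c) y = (2 * r)%:R * c.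
Proof.
rewrite /slap_app -mulr_suml regular_sum_col e_reg.
by rewrite -mulrDl mul2n -addnn natrD.
Qed.

Lemma regular_sum_slap_app f : \sum_y slap_app f y = (2 * r)%:R * \sum_x f x.
Proof.
by rewrite sum_slap_app mulr_sumr; apply: eq_bigr => x _; rewrite e_reg.
Qed.

Lemma regular_eigenfun_sum0 a f : a != (2 * r)%:R ->
  (forall y, slap_app f y = a * f y) -> \sum_x f x = 0.
Proof.
move=> a_neq f_eig; have := regular_sum_slap_app f.
under eq_bigr do rewrite f_eig.
move/eqP; rewrite -mulr_sumr -subr_eq0 -mulrBl mulf_eq0 subr_eq0.
by rewrite (negbTE a_neq) => /eqP.
Qed.

Hypothesis V_gt0 : (0 < #|V|)%N.

Let ones : 'rV[algC]_#|V| := const_mx 1.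

Lemma ones_mul_slap t : ones *m (t%:M - slap e) = (t - (2 * r)%:R) *: ones.
Proof.
apply/rowP => j; rewrite mulmxBr mul_mx_scalar [LHS]mxE [X in _ + X]mxE.
rewrite slap_mulmx !mxE.
rewrite (@eq_slap_app _ (fun=> 1)) => [|x]; last by rewrite mxE.
by rewrite slap_app_cst !mulr1.
Qed.

Lemma regular_slap_eigenvalue : eigenvalue (slap e) (2 * r)%:R.
Proof.
have [x _] := card_gt0P V_gt0.
apply/slap_eigenvalueP; exists (fun=> 1); first by exists x; rewrite oner_eq0.
by move=> y; rewrite slap_app_cst.
Qed.

Lemma coronal_defined_regular t : coronal_defined (slap e) t -> t != (2 * r)%:R.
Proof.
move=> t_def; apply: contraTneq t_def => ->.
by rewrite /coronal_defined -eigenvalue_unitmx regular_slap_eigenvalue.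
Qed.

Lemma coronal_regular t :
  coronal_defined (slap e) t -> coronal (slap e) t = #|V|%:R / (t - (2 * r)%:R).
Proof.
move=> t_def; have d_nz : t - (2 * r)%:R != 0.
  by rewrite subr_eq0 coronal_defined_regular.
have ones_inv : ones *m invmx (t%:M - slap e) = (t - (2 * r)%:R)^-1 *: ones.
  apply: (scalerI d_nz).
  by rewrite scalerA mulfV // scale1r scalemxAl -ones_mul_slap mulmxK.
rewrite /coronal exchange_big /=.
transitivity (\sum_j (ones *m invmx (t%:M - slap e)) 0 j).
  by apply: eq_bigr => j _; rewrite mxE; apply: eq_bigr => i _; rewrite mxE mul1r.
under eq_bigr do rewrite ones_inv !mxE mulr1.
by rewrite sumr_const card_ord mulr_natl.
Qed.
End Regular.
End SignlessLaplacian.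

Lemma sum_cst (T : finType) (c : algC) : \sum_(i : T) c = #|T|%:R * c.
Proof. by rewrite sumr_const mulr_natl. Qed.

Lemma sum_sum_pair (A B : finType) (F : (A * B) + (A * B) -> algC) :
  \sum_x F x = \sum_i \sum_k F (inl (i, k)) + \sum_i \sum_k F (inr (i, k)).
Proof.
by rewrite big_sumType !pair_bigA; congr (_ + _); apply: eq_bigr => -[].
Qed.

Section Product.
Variables (V1 V2 : finType) (e1 : rel V1) (e2 : rel V2).
Local Notation E := (gprod_rel e1 e2).
Let n2 : algC := #|V2|%:R.
Implicit Type f : (V1 * V2) + (V1 * V2) -> algC.

Definition a_sum f i := \sum_k f (inl (i, k)).
Definition b_sum f i := \sum_k f (inr (i, k)).

Lemma gprod_gdeg_inl j l : (gdeg E (inl (j, l)))%:R = n2 * (gdeg e1 j)%:R + n2.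
Proof.
rewrite !gdegE sum_sum_pair /=.
under eq_bigr do rewrite sum_cst.
under [X in _ + X]eq_bigr do rewrite sum_cst eq_sym -[(_ == _)%:R]mulr1.
by rewrite -!mulr_sumr sum_natr_eq mulr1.
Qed.

Lemma gprod_gdeg_inr s l : (gdeg E (inr (s, l)))%:R = n2 + (gdeg e2 l)%:R.
Proof.
rewrite !gdegE sum_sum_pair /=.
under eq_bigr do rewrite sum_cst.
under eq_bigr do rewrite -[(_ == _)%:R]mulr1.
rewrite -mulr_sumr sum_natr_eq mulr1; congr (_ + _).
rewrite (bigD1 s) //= eqxx [X in _ + X]big1 ?addr0 // => i /negbTE i_s.
by apply: big1 => k _; rewrite eq_sym i_s.
Qed.

Lemma slap_app_gprod_inl f j l :
  slap_app E f (inl (j, l)) =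
  (n2 * (gdeg e1 j)%:R + n2) * f (inl (j, l))
  + \sum_i (e1 i j)%:R * a_sum f i + b_sum f j.
Proof.
rewrite /slap_app gprod_gdeg_inl sum_sum_pair /= -addrA; congr (_ + (_ + _)).
  by apply: eq_bigr => i _; rewrite /a_sum mulr_sumr.
under eq_bigr do rewrite -mulr_sumr eq_sym.
exact: sum_natr_eq.
Qed.

Lemma slap_app_gprod_inr f s l :
  slap_app E f (inr (s, l)) =
  n2 * f (inr (s, l)) + a_sum f s + slap_app e2 (fun k => f (inr (s, k))) l.
Proof.
rewrite /slap_app gprod_gdeg_inr sum_sum_pair /=.
have -> : \sum_i \sum_k (i == s)%:R * f (inl (i, k)) = a_sum f s.
  by under eq_bigr do rewrite -mulr_sumr; exact: sum_natr_eq.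
have -> : \sum_i \sum_k ((i == s) && e2 k l)%:R * f (inr (i, k)) =
          \sum_k (e2 k l)%:R * f (inr (s, k)).
  rewrite (bigD1 s) //= eqxx [X in _ + X]big1 ?addr0 // => i /negbTE i_s.
  by apply: big1 => k _; rewrite i_s mul0r.
ring.
Qed.

Lemma sum_slap_app_gprod_inl f j :
  \sum_l slap_app E f (inl (j, l)) =
  n2 * (slap_app e1 (a_sum f) j + a_sum f j + b_sum f j).
Proof.
under eq_bigr do rewrite slap_app_gprod_inl.
rewrite !big_split /= !sum_cst -mulr_sumr -/(a_sum f j) -/n2 /slap_app; ring.
Qed.

Lemma gprod_eigen_block_sums0 a f : (exists z, f z != 0) ->
  (forall y, slap_app E f y = a * f y) ->
  (forall i, a_sum f i = 0) -> (forall i, b_sum f i = 0) ->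
  (exists j, a = n2 * (gdeg e1 j)%:R + n2) \/ eigenvalue (slap e2) (a - n2).
Proof.
move=> [[[j l] | [s l]] fz_nz] f_eig a_sum0 b_sum0.
  left; exists j; apply: (mulIf fz_nz).
  rewrite -f_eig slap_app_gprod_inl b_sum0.
  by rewrite big1 ?addr0 // => i _; rewrite a_sum0 mulr0.
right; apply/slap_eigenvalueP.
exists (fun k => f (inr (s, k))); first by exists l.
move=> k; have := f_eig (inr (s, k)); rewrite slap_app_gprod_inr a_sum0 addr0.
by rewrite mulrBl => <-; ring.
Qed.

Section RegularSecondFactor.
Variable r2 : nat.
Hypotheses (e2_sym : symmetric e2) (e2_reg : regular e2 r2).

Lemma sum_slap_app_gprod_inr f s :
  \sum_l slap_app E f (inr (s, l)) =
  (n2 + (2 * r2)%:R) * b_sum f s + n2 * a_sum f s.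
Proof.
under eq_bigr do rewrite slap_app_gprod_inr.
rewrite 2!big_split /= (regular_sum_slap_app e2_reg) !sum_cst -mulr_sumr.
by rewrite -/(b_sum f s) -/n2; ring.
Qed.

Lemma gprod_eigenvalue_lift mu : (0 < #|V1|)%N ->
  mu != (2 * r2)%:R -> eigenvalue (slap e2) mu -> eigenvalue (slap E) (mu + n2).
Proof.
move=> V1_gt0 mu_neq /slap_eigenvalueP [g [k0 gk0_nz] g_eig].
have [i0 _] := card_gt0P V1_gt0.
have g_sum0 := regular_eigenfun_sum0 e2_reg mu_neq g_eig.
pose f (z : (V1 * V2) + (V1 * V2)) : algC :=
  if z is inr (i, k) then (i == i0)%:R * g k else 0.
apply/slap_eigenvalueP; exists f.
  by exists (inr (i0, k0)); rewrite /f eqxx mul1r.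
case=> [[j l] | [s l]].
  rewrite slap_app_gprod_inl /a_sum /b_sum /f /= -mulr_sumr g_sum0.
  by rewrite big1 => [|i _]; rewrite ?big1 ?mulr0 ?addr0.
rewrite slap_app_gprod_inr /a_sum /f /= big1 // slap_appZ g_eig; ring.
Qed.

Lemma gprod_eigenvalue_quotient nu x : (0 < #|V2|)%N ->
  eigenvalue (slap e1) nu -> x - n2 - (2 * r2)%:R != 0 ->
  x - n2 - n2 * nu - n2 * (n2 / (x - n2 - (2 * r2)%:R)) = 0 ->
  eigenvalue (slap E) x.
Proof.
move=> V2_gt0 /slap_eigenvalueP [u [i1 ui1_nz] u_eig].
set d := x - n2 - (2 * r2)%:R => d_nz x_eq.
have [k0 _] := card_gt0P V2_gt0.
pose f (z : (V1 * V2) + (V1 * V2)) : algC :=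
  match z with inl (i, _) => u i | inr (i, _) => n2 / d * u i end.
apply/slap_eigenvalueP; exists f; first by exists (inl (i1, k0)).
case=> [[j l] | [s l]].
  rewrite slap_app_gprod_inl /a_sum /b_sum /f /=.
  under eq_bigr do rewrite sum_cst mulrCA.
  rewrite sum_cst -mulr_sumr -/n2.
  have adj_sum : \sum_i (e1 i j)%:R * u i = nu * u j - (gdeg e1 j)%:R * u j.
    by rewrite -u_eig /slap_app addrAC subrr add0r.
  have x_def : x = n2 + n2 * nu + n2 * (n2 / d).
    by apply/eqP; rewrite -subr_eq0 -x_eq; apply/eqP; ring.
  by rewrite adj_sum x_def; ring.
rewrite slap_app_gprod_inr /a_sum /f /= sum_cst -/n2 (slap_app_cst e2_sym e2_reg).
have x_def : x = d + n2 + (2 * r2)%:R by rewrite /d; ring.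
by rewrite x_def; field.
Qed.

Lemma gprod_eigen_block_sums a f i1 : (0 < #|V2|)%N ->
  (forall y, slap_app E f y = a * f y) ->
  (a_sum f i1 != 0) || (b_sum f i1 != 0) -> a - n2 - (2 * r2)%:R != 0 ->
  exists2 nu, eigenvalue (slap e1) nu &
    a - n2 - n2 * nu - n2 * (n2 / (a - n2 - (2 * r2)%:R)) = 0.
Proof.
move=> V2_gt0 f_eig sums_nz; set d := a - n2 - (2 * r2)%:R => d_nz.
have n2_nz : n2 != 0 by rewrite pnatr_eq0 -lt0n.
have a_sum_eig j : n2 * (slap_app e1 (a_sum f) j + a_sum f j + b_sum f j) =
                   a * a_sum f j.
  rewrite -sum_slap_app_gprod_inl.
  by under eq_bigr do rewrite f_eig; rewrite -mulr_sumr.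
have b_sumE s : b_sum f s = n2 / d * a_sum f s.
  have := sum_slap_app_gprod_inr f s; under eq_bigr do rewrite f_eig.
  rewrite -mulr_sumr -/(b_sum f s) => b_eig.
  apply: (mulfI d_nz); rewrite mulrA mulrCA divff // mulr1 /d !mulrBl b_eig.
  rewrite natrM; ring.
have a_sum_nz : a_sum f i1 != 0.
  by apply: contraTneq sums_nz => a0; rewrite b_sumE a0 mulr0 eqxx.
exists ((a - n2 - n2 * (n2 / d)) / n2); last by field; rewrite d_nz -/n2 n2_nz.
apply/slap_eigenvalueP; exists (a_sum f); first by exists i1.
move=> j; apply: (mulfI n2_nz).
have -> : n2 * slap_app e1 (a_sum f) j =
          a * a_sum f j - n2 * a_sum f j - n2 * (n2 / d) * a_sum f j.
  by rewrite -a_sum_eig b_sumE; ring.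
by field; rewrite -/n2 n2_nz.
Qed.

Lemma gprod_eigenvalue_cases a : (0 < #|V2|)%N -> eigenvalue (slap E) a ->
  [\/ exists j, a = n2 * (gdeg e1 j)%:R + n2,
      eigenvalue (slap e2) (a - n2),
      a = n2 + (2 * r2)%:R |
      exists2 nu, eigenvalue (slap e1) nu &
        a - n2 - n2 * nu - n2 * (n2 / (a - n2 - (2 * r2)%:R)) = 0].
Proof.
move=> V2_gt0 /slap_eigenvalueP [f f_nz f_eig].
have [/forallP sums0 | ] :=
  boolP [forall i, (a_sum f i == 0) && (b_sum f i == 0)].
  have a_sum0 i : a_sum f i = 0 by have /andP [/eqP] := sums0 i.
  have b_sum0 i : b_sum f i = 0 by have /andP [_ /eqP] := sums0 i.
  have [a_deg | a_eig] := gprod_eigen_block_sums0 f_nz f_eig a_sum0 b_sum0.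
    by constructor 1.
  by constructor 2.
rewrite negb_forall => /existsP [i1]; rewrite negb_and => sums_nz.
have [-> | a_neq] := eqVneq a (n2 + (2 * r2)%:R); first by constructor 3.
constructor 4; apply: gprod_eigen_block_sums V2_gt0 f_eig sums_nz _.
by rewrite subr_eq0 subr_eq addrC.
Qed.
End RegularSecondFactor.
End Product.

Unset Implicit Arguments.

Theorem theorem7 (V1 V2 : finType) (e1 : rel V1) (e2 : rel V2) (r1 r2 : nat) :
  simple_graph e1 -> simple_graph e2 ->
  regular e1 r1 -> regular e2 r2 ->
  (0 < #|V1|)%N -> (0 < #|V2|)%N ->
  SL_integral (gprod_rel e1 e2) <->
  (SL_integral e2 /\
   forall nu1 : algC, eigenvalue (slap e1) nu1 ->
   forall x : algC,
     coronal_defined (slap e2) (x - #|V2|%:R) ->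
     x - #|V2|%:R - #|V2|%:R * nu1
       - #|V2|%:R * coronal (slap e2) (x - #|V2|%:R) = 0 ->
     x \in Num.int).
Proof.
move=> _ [_ e2_sym] _ e2_reg V1_gt0 V2_gt0.
have shift_int a : a - #|V2|%:R \in Num.int -> a \in Num.int.
  by move=> a_int; rewrite -(subrK #|V2|%:R a) rpredD ?natr_int.
split => [gprod_int | [e2_int coronal_int] a].
  split => [mu mu_eig | nu nu_eig x x_cor x_eq].
    have [-> | mu_neq] := eqVneq mu (2 * r2)%:R; first exact: natr_int.
    rewrite -(addrK #|V2|%:R mu) rpredB ?natr_int //.
    exact/gprod_int/(gprod_eigenvalue_lift e1 e2_reg V1_gt0 mu_neq mu_eig).
  rewrite (coronal_regular e2_sym e2_reg V2_gt0 x_cor) in x_eq.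
  apply/gprod_int/(gprod_eigenvalue_quotient e2_sym e2_reg V2_gt0 nu_eig) => //.
  by rewrite subr_eq0 (coronal_defined_regular e2_sym e2_reg V2_gt0).
case/(gprod_eigenvalue_cases e2_reg V2_gt0).
- by case=> j ->; rewrite rpredD ?rpredM ?natr_int.
- by move=> a_eig; apply/shift_int/e2_int.
- by move=> ->; rewrite rpredD ?natr_int.
case=> nu nu_eig a_eq.
have [a_cor | a_ncor] := boolP (coronal_defined (slap e2) (a - #|V2|%:R)).
  apply: (coronal_int nu nu_eig a a_cor).
  by rewrite (coronal_regular e2_sym e2_reg V2_gt0 a_cor).
by apply/shift_int/e2_int; rewrite eigenvalue_unitmx.
Qed.
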